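(* Let $U\in C^{3}(\mathbb{R}^{d})$ be a Morse function and $\boldsymbol{\ell}$ a $C^{1}$ vector field with $\nabla U\cdot\boldsymbol{\ell}\equiv0$. Let $\boldsymbol{\sigma}$ be a critical point of $U$ such that $\mathbb{H}^{\boldsymbol{\sigma}}=\nabla^{2}U(\boldsymbol{\sigma})$ has exactly one negative eigenvalue $-\lambda^{\boldsymbol{\sigma}}$, and let $-\mu^{\boldsymbol{\sigma}}$ denote the unique negative eigenvalue of $\mathbb{H}^{\boldsymbol{\sigma}}+\mathbb{L}^{\boldsymbol{\sigma}}$, where $\mathbb{L}^{\boldsymbol{\sigma}}=D\boldsymbol{\ell}(\boldsymbol{\sigma})$. Then $\mu^{\boldsymbol{\sigma}}\ge\lambda^{\boldsymbol{\sigma}}$, and consequently $\omega^{\boldsymbol{\sigma}}\ge\omega^{\boldsymbol{\sigma}}_{\mathrm{rev}}$, where $\omega^{\boldsymbol{\sigma}}=\frac{\mu^{\boldsymbol{\sigma}}}{2\pi\sqrt{-\det\mathbb{H}^{\boldsymbol{\sigma}}}}$ and $\omega^{\boldsymbol{\sigma}}_{\mathrm{rev}}=\frac{\lambda^{\boldsymbol{\sigma}}}{2\pi\sqrt{-\det\mathbb{H}^{\boldsymbol{\sigma}}}}$.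
   Context: Under these hypotheses it is known that $\mathbb{H}^{\boldsymbol{\sigma}}+\mathbb{L}^{\boldsymbol{\sigma}}$ is invertible and has exactly one negative eigenvalue, so $\mu^{\boldsymbol{\sigma}}>0$ is well defined. *)

From HB Require Import structures.
From mathcomp Require Import all_boot all_order all_algebra.
From mathcomp Require Import all_classical all_reals all_analysis.
Set Implicit Arguments. Unset Strict Implicit. Unset Printing Implicit Defensive.
Import Order.TTheory GRing.Theory Num.Theory.
Import numFieldNormedType.Exports.
Local Open Scope ring_scope.

Section Defs.
Variables (R : realType) (d : nat).

Definition evec (i : 'I_d) : 'rV[R]_d := delta_mx 0 i.

Definition pderiv (i : 'I_d) (f : 'rV[R]_d -> R) : 'rV[R]_d -> R :=
  'D_(evec i) f.

Fixpoint Ck (k : nat) (f : 'rV[R]_d -> R) : Prop :=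
  match k with
  | 0 => continuous f
  | k'.+1 => continuous f /\
      forall i : 'I_d, (forall x, derivable f x (evec i)) /\ Ck k' (pderiv i f)
  end.

Definition Ck_field (k : nat) (l : 'rV[R]_d -> 'rV[R]_d) : Prop :=
  forall j : 'I_d, Ck k (fun x => l x 0 j).

Definition grad (f : 'rV[R]_d -> R) (x : 'rV[R]_d) : 'rV[R]_d :=
  \row_i pderiv i f x.

Definition hessian (f : 'rV[R]_d -> R) (x : 'rV[R]_d) : 'M[R]_d :=
  \matrix_(i, j) pderiv j (pderiv i f) x.

Definition jacobian_field (l : 'rV[R]_d -> 'rV[R]_d) (x : 'rV[R]_d) : 'M[R]_d :=
  \matrix_(i, j) pderiv j (fun y => l y 0 i) x.

Definition critical_point (f : 'rV[R]_d -> R) (x : 'rV[R]_d) : Prop :=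
  grad f x = 0.

Definition morse (f : 'rV[R]_d -> R) : Prop :=
  forall x, critical_point f x -> \det (hessian f x) != 0.

End Defs.

(* The Hessian H = D^2 U(sigma) is symmetric (Schwarz) and invertible (Morse).
   Expand grad U . l = 0 around the critical point sigma: the first-order term
   gives l(sigma) H = 0, hence l(sigma) = 0, and then the second-order term gives
   y H L y^T = 0 for every y, i.e. H L is skew-symmetric.  Write a left
   eigenvector of H + L for -mu as w = u H; then u H (H + L) u^T = -mu u H u^T,
   and skew-symmetry reduces this to |w|^2 = -mu u H u^T > 0.  On the other hand
   every eigenvalue r of H satisfies r (r + lam) >= 0, since -lam is the only
   negative one, so H (H + lam) is positive semidefinite by the spectral theorem:
   |w|^2 + lam u H u^T >= 0.  Together these force lam <= mu. *)

From HB Require Import structures.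
From mathcomp Require Import all_boot all_order all_algebra.
From mathcomp Require Import all_classical all_reals all_analysis.
From mathcomp Require Import complex ring lra.
Set Implicit Arguments. Unset Strict Implicit. Unset Printing Implicit Defensive.
Import Order.TTheory GRing.Theory Num.Theory.
Import numFieldNormedType.Exports.
Local Open Scope ring_scope.
Local Open Scope classical_set_scope.

Section ClosedField.
Variable C : numClosedFieldType.
Local Open Scope sesquilinear_scope.

Lemma eigenvalue_spectral_diag n (A : 'M[C]_n) k :
  A \is normalmx -> eigenvalue A (spectral_diag A 0 k).
Proof.
move=> /orthomx_spectralP; set P := spectralmx A => A_eq.
apply/eigenvalueP; exists (row k P).
  rewrite -row_mul {1}A_eq !mulmxA mulmxV ?spectral_unit // mul1mx.
  by rewrite row_mul row_diag_mx -scalemxAl -rowE.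
apply/eqP => Pk0; have /row_unitarymxP/(_ k k) := spectral_unitarymx A.
by rewrite Pk0 dotmxE mul0mx mxE eqxx => /eqP; rewrite eq_sym oner_eq0.
Qed.

Lemma hermitian_eigenvalue_real n (A : 'M[C]_n) r :
  A \is hermsymmx -> eigenvalue A r -> r \is Num.real.
Proof.
move=> /is_hermitianmxP; rewrite expr0 scale1r => A_herm /eigenvalueP[v vA v0].
have s_eq : (v *m A *m v^t*) 0 0 = r * (v *m v^t*) 0 0.
  by rewrite vA -scalemxAl mxE.
have s_real : ((v *m A *m v^t*) 0 0)^* = (v *m A *m v^t*) 0 0.
  rewrite {2}A_herm -[v in RHS]trmxCK -!map_mxM -!trmx_mul mulmxA trmxCK.
  by rewrite [RHS]mxE [_^T _ _]mxE.
have vv_gt0 : 0 < (v *m v^t*) 0 0 by rewrite -dotmxE dnorm_gt0.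
apply/CrealP; apply: (mulIf (lt0r_neq0 vv_gt0)).
rewrite -s_eq -s_real s_eq rmorphM.
by congr (_ * _); apply/esym/CrealP/gtr0_real.
Qed.

Lemma diag_form_ge0 n (e z : 'rV[C]_n) :
  (forall k, 0 <= e 0 k) -> 0 <= (z *m diag_mx e *m z^t*) 0 0.
Proof.
move=> e_ge0; rewrite mul_mx_diag mxE; apply: sumr_ge0 => k _.
by rewrite !mxE mulrAC mulr_ge0 ?mul_conjC_ge0.
Qed.

Lemma normalmx_form_shift_ge0 n (A : 'M[C]_n) (c : C) (w : 'rV_n) :
  A \is normalmx -> (forall r, eigenvalue A r -> 0 <= r * (r + c)) ->
  0 <= (w *m (A *m (A + c%:M)) *m w^t*) 0 0.
Proof.
move=> Anormal eigA; have /orthomx_spectralP := Anormal.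
set P := spectralmx A; set D := spectral_diag A => A_eq.
have Pu : P \is unitarymx := spectral_unitarymx A.
pose e := \row_k (D 0 k * (D 0 k + c)).
have A_shift : A + c%:M = P^t* *m (diag_mx D + c%:M) *m P.
  rewrite mulmxDr mulmxDl -invmx_unitary // -A_eq mul_mx_scalar -scalemxAl.
  by rewrite mulVmx ?spectral_unit // scalemx1.
have A_prod : A *m (A + c%:M) = P^t* *m diag_mx e *m P.
  rewrite A_shift {1}A_eq invmx_unitary // !mulmxA -[_ *m P *m P^t*]mulmxA.
  rewrite (unitarymxP Pu) mulmx1 -[_ *m diag_mx D *m _]mulmxA; congr (_ *m _ *m _).
  rewrite -diag_const_mx -raddfD mul_diag_mx; apply/matrixP => i j; rewrite !mxE.
  by case: eqVneq => [->|_]; rewrite ?mulr1n ?mulr0n ?mulr0.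
rewrite A_prod !mulmxA -[w *m _ *m _ *m P *m _]mulmxA.
have -> : P *m w^t* = (w *m P^t*)^t* by rewrite trmx_mul map_mxM trmxCK.
apply: diag_form_ge0 => k; rewrite mxE; exact/eigA/eigenvalue_spectral_diag.
Qed.

End ClosedField.

Definition qform (R : comNzRingType) n (A : 'M[R]_n) (y : 'rV[R]_n) : R :=
  (y *m A *m y^T) 0 0.

Lemma qformD (R : comNzRingType) n (A B : 'M[R]_n) y :
  qform (A + B) y = qform A y + qform B y.
Proof. by rewrite /qform mulmxDr mulmxDl mxE. Qed.

Lemma qformZ (R : comNzRingType) n (a : R) (A : 'M[R]_n) y :
  qform (a *: A) y = a * qform A y.
Proof. by rewrite /qform -scalemxAr -scalemxAl mxE. Qed.

Lemma qform1_gt0 (R : realDomainType) n (y : 'rV[R]_n) : y != 0 -> 0 < qform 1%:M y.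
Proof.
move=> y0; rewrite /qform mulmx1 mxE.
have sq_ge0 (k : 'I_n) : true -> 0 <= y 0 k * y^T k 0 by rewrite mxE -expr2 sqr_ge0.
rewrite lt0r sumr_ge0 ?andbT //; move: y0; apply: contraNneq => sum0.
apply/eqP/rowP => k; have /eqP := psumr_eq0P sq_ge0 sum0 (i := k) isT.
by rewrite !mxE mulf_eq0 orbb => /eqP.
Qed.

(* Over [R[i]], where the spectral theorem is available, [H] becomes hermitian. *)
Lemma symmx_qform_shift_ge0 (R : rcfType) n (H : 'M[R]_n) (c : R) (w : 'rV_n) :
  H^T = H -> (forall r, eigenvalue H r -> 0 <= r * (r + c)) ->
  0 <= qform (H *m (H + c%:M)) w.
Proof.
move=> Hsym eigH; pose f := real_complex R.
have real_f m p (M : 'M[R]_(m, p)) : map_mx f M \is a realmx.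
  by apply/mxOverP => i j; rewrite mxE; apply/complex_realP; exists (M i j).
have Hf_herm : map_mx f H \is hermsymmx.
  apply: realsym_hermsym (real_f _ _ H).
  by apply/is_hermitianmxP; rewrite expr0 scale1r map_mx_id ?map_trmx ?Hsym.
have eigHf (r : R[i]) : eigenvalue (map_mx f H) r -> 0 <= r * (r + f c).
  move=> eigr; have /complex_realP[x r_eq] := hermitian_eigenvalue_real Hf_herm eigr.
  rewrite r_eq in eigr *.
  have /eigH : eigenvalue H x by rewrite -(eigenvalue_map f).
  by rewrite -!rmorphD -rmorphM [X in _ -> 0 <= X]/= ler0c.
have := normalmx_form_shift_ge0 (map_mx f w) (hermitian_normalmx Hf_herm) eigHf.
rewrite map_trmx realmxC // -map_scalar_mx -map_mxD -!map_mxM mxE.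
by rewrite /qform [X in 0 <= X -> _]/= ler0c.
Qed.

Lemma neg_eigenvalue_skew_perturbation_ge (R : rcfType) n (H J : 'M[R]_n) (lam mu : R) :
  H^T = H -> H \in unitmx -> (forall y, qform (H *m J) y = 0) ->
  (forall y, 0 <= qform (H *m (H + lam%:M)) y) ->
  0 < mu -> eigenvalue (H + J) (- mu) -> lam <= mu.
Proof.
move=> Hsym Hu HJ0 shift_ge0 mu_gt0 /eigenvalueP[w wHJ w0].
pose u := w *m invmx H; have uH : u *m H = w by rewrite mulmxKV.
have HH_pos : 0 < qform (H *m H) u.
  suff -> : qform (H *m H) u = qform 1%:M w by exact: qform1_gt0.
  by rewrite /qform mulmx1 -uH [(u *m H)^T]trmx_mul Hsym !mulmxA.
have HH_eq : qform (H *m H) u = - mu * qform H u.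
  rewrite -[LHS]addr0 -(HJ0 u) -qformD -mulmxDr /qform mulmxA uH wHJ -scalemxAl.
  by rewrite -uH mxE.
have := shift_ge0 u; rewrite mulmxDr qformD mul_mx_scalar qformZ HH_eq.
by nra.
Qed.

Lemma lim_sum_mul_eq0 (R : numFieldType) (T : Type) (F : set_system T) {FF : ProperFilter F}
    n (f g : 'I_n -> T -> R) (a b : 'I_n -> R) :
  (forall i, f i @ F --> a i) -> (forall i, g i @ F --> b i) ->
  (\forall t \near F, \sum_i f i t * g i t = 0) -> \sum_i a i * b i = 0.
Proof.
move=> fa gb sum0.
have sum_cvg : (fun t => \sum_i f i t * g i t) @ F --> \sum_i a i * b i.
  by apply: cvg_big => [|i _]; [exact: add_continuous | exact: cvgM].
exact: cvg_unique _ sum_cvg (cvg_near_cst _ sum0).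
Qed.

Section Calculus.
Variables (R : realType) (d : nat).
Local Notation V := 'rV[R]_d.

Lemma mvt_from0 (F dF : R -> R) (t : R) :
  (forall s : R, is_derive s (1 : R) F (dF s)) ->
  exists c, `|c| <= `|t| /\ F t - F 0 = t * dF c.
Proof.
move=> dF_F.
have F_derivable : forall a b : R, {in `[a, b]%R, forall z, derivable F z 1}.
  by move=> a b z _; have [] := dF_F z.
have F_cont := fun a b => derivable_within_continuous (F_derivable a b).
have [t_ge0|t_lt0] := lerP 0 t.
  have [c] := MVT_segment t_ge0 (fun z _ => dF_F z) (F_cont 0 t).
  rewrite in_itv /= => /andP[c_ge0 c_le] ->; exists c.
  by rewrite subr0 mulrC !ger0_norm.
have [c] := MVT_segment (ltW t_lt0) (fun z _ => dF_F z) (F_cont t 0).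
rewrite in_itv /= => /andP[c_gt c_le0] E; exists c; split.
  by rewrite !ler0_norm ?lerN2 // ltW.
by rewrite -opprB E sub0r mulrN mulrC opprK.
Qed.

Lemma is_derive_line (f : V -> R) (v x : V) s : derivable f (s *: v + x) v ->
  is_derive s 1 (fun s => f (s *: v + x)) ('D_v f (s *: v + x)).
Proof.
have quotE : (fun h : R => h^-1 *: (((fun s => f (s *: v + x)) \o shift s) (h *: (1 : R))
      - f (s *: v + x))) =
    (fun h => h^-1 *: ((f \o shift (s *: v + x)) (h *: v) - f (s *: v + x))).
  by apply/funext => h /=; rewrite [_%:A]mulr1 scalerDl addrA.
by move=> df; split; [rewrite /derivable quotE | rewrite /derive quotE].
Qed.

Lemma cvg_at0_linear_bound (xi : R -> V) x K :
  (forall t, `|xi t - x| <= `|t| * K) -> xi @ 0^' --> x.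
Proof.
move=> xi_near; apply/cvgrPdist_lt => e e_gt0.
have K1_gt0 : 0 < `|K| + 1 by rewrite ltr_wpDl.
near=> t; rewrite distrC (le_lt_trans (xi_near t)) //.
have t_small : `|t| < e / (`|K| + 1).
  by near: t; apply: dnbhs0_lt; rewrite divr_gt0.
rewrite (@le_lt_trans _ _ (`|t| * (`|K| + 1))) -?ltr_pdivlMr //.
by rewrite ler_wpM2l // (le_trans (ler_norm K)) // lerDl.
Unshelve. all: by end_near.
Qed.

Lemma eq_at_of_approx_eq (A B : V -> R) x K :
  {for x, continuous A} -> {for x, continuous B} ->
  (forall t : R, t != 0 -> exists p q,
     [/\ `|p - x| <= `|t| * K, `|q - x| <= `|t| * K & A p = B q]) ->
  A x = B x.
Proof.
move=> A_cont B_cont approx.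
have approx' (t : R) : exists pq : V * V, [/\ `|pq.1 - x| <= `|t| * K,
    `|pq.2 - x| <= `|t| * K & t != 0 -> A pq.1 = B pq.2].
  have [->|t0] := eqVneq t 0.
    by exists (x, x); split; rewrite /= ?subrr ?normr0 ?mul0r ?eqxx.
  by have [p [q [p_near q_near ABpq]]] := approx t t0; exists (p, q).
have [pq pq_approx] := choice approx'.
have p_cvg : (fun t => (pq t).1) @ 0^' --> x.
  by apply: (@cvg_at0_linear_bound _ _ K) => t; case: (pq_approx t).
have q_cvg : (fun t => (pq t).2) @ 0^' --> x.
  by apply: (@cvg_at0_linear_bound _ _ K) => t; case: (pq_approx t).
have Bq_cvg : (fun t => B (pq t).2) @ 0^' --> B x := cvg_comp _ _ q_cvg B_cont.
have Bq_cvgA : (fun t => B (pq t).2) @ 0^' --> A x.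
  apply: cvg_trans (cvg_comp _ _ p_cvg A_cont); apply: near_eq_cvg; near=> t.
  have [_ _ ABpq] := pq_approx t; apply: ABpq; near: t; exact: nbhs_dnbhs_neq.
exact: cvg_unique _ Bq_cvgA Bq_cvg.
Unshelve. all: by end_near.
Qed.

Definition sdiff (f : V -> R) (x a b : V) (t : R) : R :=
  f (t *: a + (t *: b + x)) - f (t *: a + x) - (f (t *: b + x) - f x).

Lemma sdiffC f x a b t : sdiff f x a b t = sdiff f x b a t.
Proof. by rewrite /sdiff [t *: a + _]addrCA; ring. Qed.

Lemma sdiff_mvt (f : V -> R) (x a b : V) (t : R) :
  (forall z, derivable f z a) -> (forall z, derivable ('D_a f) z b) ->
  exists p, `|p - x| <= `|t| * (`|a| + `|b|) /\
    sdiff f x a b t = t * (t * 'D_b ('D_a f) p).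
Proof.
move=> fa fab.
have [c1 [c1_le E1]] := @mvt_from0 (fun s => f (s *: a + (t *: b + x)) - f (s *: a + x))
  (fun s => 'D_a f (s *: a + (t *: b + x)) - 'D_a f (s *: a + x)) t
  (fun s => is_deriveB (@is_derive_line f a (t *: b + x) s (fa _))
                        (@is_derive_line f a x s (fa _))).
have [c2 [c2_le E2]] := mvt_from0 t
  (fun r => @is_derive_line ('D_a f) b (c1 *: a + x) r (fab _)).
exists (c2 *: b + (c1 *: a + x)); split.
  rewrite addrA addrK (le_trans (ler_normD _ _)) // !normrZ mulrDr addrC.
  by rewrite lerD // ler_wpM2r.
by move: E1 E2; rewrite /sdiff !scale0r !add0r [c1 *: a + (t *: b + x)]addrCA => -> ->.
Qed.

Lemma mixed_derive_comm (f : V -> R) (a b x : V) :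
  (forall z, derivable f z a) -> (forall z, derivable f z b) ->
  (forall z, derivable ('D_a f) z b) -> (forall z, derivable ('D_b f) z a) ->
  {for x, continuous ('D_b ('D_a f))} -> {for x, continuous ('D_a ('D_b f))} ->
  'D_b ('D_a f) x = 'D_a ('D_b f) x.
Proof.
move=> fa fb fab fba fab_cont fba_cont.
apply: (eq_at_of_approx_eq (K := `|a| + `|b|) fab_cont fba_cont) => t t0.
have [p [p_near Ep]] := sdiff_mvt x t fa fab.
have [q [q_near Eq]] := sdiff_mvt x t fb fba.
exists p, q; split; [exact: p_near | by rewrite [`|a| + _]addrC |].
move: Ep; rewrite sdiffC Eq => /(mulfI t0)/(mulfI t0) ABqp.
exact: esym ABqp.
Qed.

Lemma hessian_tr (f : V -> R) x : Ck 2 f -> (hessian f x)^T = hessian f x.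
Proof.
move=> [_ C2f]; apply/matrixP => i j; rewrite !mxE.
have [fi [_ C1fi]] := C2f i; have [fj [_ C1fj]] := C2f j.
exact: mixed_derive_comm fj fi (C1fj i).1 (C1fi j).1 ((C1fj i).2 x) ((C1fi j).2 x).
Qed.

Lemma critical_point_pderiv (f : V -> R) x i : critical_point f x -> pderiv i f x = 0.
Proof. by move/(congr1 (fun v : V => v 0 i)); rewrite /grad !mxE. Qed.

Lemma CkS k (f : V -> R) : Ck k.+1 f -> Ck k f.
Proof.
elim: k f => [|k IH] f [f_cont Cf] //; split => // i.
by have [fi Cfi] := Cf i; split => //; exact: IH.
Qed.

Definition diffq (g : V -> R) (x y : V) (t : R) : R := t^-1 * (g (t *: y + x) - g x).

Definition coord_prefix (y : V) (m : nat) : V :=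
  \sum_(j < d | (j < m)%N) y 0 j *: evec R j.

Lemma coord_prefix0 y : coord_prefix y 0 = 0.
Proof. by rewrite /coord_prefix big_pred0. Qed.

Lemma coord_prefix_all y : coord_prefix y d = y.
Proof.
by rewrite /coord_prefix [RHS]row_sum_delta; apply: eq_bigl => j; exact: ltn_ord.
Qed.

Lemma coord_prefixS y (k : 'I_d) :
  coord_prefix y k.+1 = coord_prefix y k + y 0 k *: evec R k.
Proof.
rewrite /coord_prefix (bigD1 k) ?ltnSn //= addrC; congr (_ + _).
by apply: eq_bigl => j; rewrite ltnS ltn_neqAle andbC.
Qed.

(* The mean value theorem on each edge of the staircase path from [x] to
   [t *: y + x] along the coordinate axes. *)
Lemma coord_mvt (g : V -> R) (x y : V) (t : R) :
  (forall k z, derivable g z (evec R k)) ->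
  exists c : 'I_d -> R, (forall k, `|c k| <= `|t| * `|y 0 k|) /\
    g (t *: y + x) - g x = \sum_k t * y 0 k *
      pderiv k g (c k *: evec R k + (t *: coord_prefix y k + x)).
Proof.
move=> dg; pose Y := coord_prefix y.
have step (k : 'I_d) : exists c, `|c| <= `|t| * `|y 0 k| /\
    g (t *: Y k.+1 + x) - g (t *: Y k + x) =
    t * y 0 k * pderiv k g (c *: evec R k + (t *: Y k + x)).
  have [c [c_le E]] := mvt_from0 (t * y 0 k)
    (fun s => @is_derive_line g (evec R k) (t *: Y k + x) s (dg k _)).
  exists c; split; first by rewrite -normrM.
  move: E; rewrite scale0r add0r => <-.
  by rewrite /Y coord_prefixS scalerDr scalerA (addrC (t *: _)) addrA.
have [c c_spec] := choice step; exists c; split => [k|]; first exact: (c_spec k).1.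
have telescope : \sum_(k < d) (g (t *: Y k.+1 + x) - g (t *: Y k + x)) =
    g (t *: y + x) - g x.
  rewrite -(big_mkord xpredT (fun k => g (t *: Y k.+1 + x) - g (t *: Y k + x))).
  by rewrite telescope_sumr // /Y coord_prefix_all coord_prefix0 scaler0 add0r.
by rewrite -telescope; apply: eq_bigr => k _; exact: (c_spec k).2.
Qed.

Lemma cvg_diffq (g : V -> R) (x y : V) :
  (forall k z, derivable g z (evec R k)) ->
  (forall k, {for x, continuous (pderiv k g)}) ->
  diffq g x y @ 0^' --> \sum_k y 0 k * pderiv k g x.
Proof.
move=> dg cg; have [c c_spec] := choice (fun t => coord_mvt x y t dg).
pose xi k t := c t k *: evec R k + (t *: coord_prefix y k + x).
have xi_cvg k : xi k @ 0^' --> x.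
  apply: (@cvg_at0_linear_bound _ _ (`|y 0 k| * `|evec R k| + `|coord_prefix y k|)).
  move=> t; rewrite /xi addrA addrK (le_trans (ler_normD _ _)) // !normrZ mulrDr.
  by rewrite lerD // mulrA ler_wpM2r // (c_spec t).1.
have sum_cvg : (fun t => \sum_k y 0 k * pderiv k g (xi k t)) @ 0^' -->
    \sum_k y 0 k * pderiv k g x.
  apply: cvg_big => [|k _]; first exact: add_continuous.
  exact: cvgMl_tmp (cvg_comp _ _ (xi_cvg k) (cg k)).
apply: cvg_trans sum_cvg; apply: near_eq_cvg; near=> t.
have t0 : t != 0 by near: t; exact: nbhs_dnbhs_neq.
rewrite /diffq (c_spec t).2 mulr_sumr; apply: eq_bigr => k _.
by rewrite -mulrA mulKf.
Unshelve. all: by end_near.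
Qed.

Lemma cvg_diffq_mx (F : 'I_d -> V -> R) x y i : Ck 1 (F i) ->
  diffq (F i) x y @ 0^' --> (y *m (\matrix_(k, j) pderiv j (F k) x)^T) 0 i.
Proof.
move=> [_ C1F].
have -> : (y *m (\matrix_(k, j) pderiv j (F k) x)^T) 0 i =
    \sum_k y 0 k * pderiv k (F i) x.
  by rewrite mxE; apply: eq_bigr => k _; rewrite !mxE.
by apply: cvg_diffq => k; [exact: (C1F k).1 | exact: (C1F k).2].
Qed.

End Calculus.

Section GradientOrthogonalField.
Variables (R : realType) (d : nat) (U : 'rV[R]_d -> R) (l : 'rV[R]_d -> 'rV[R]_d).
Variable sigma : 'rV[R]_d.
Hypotheses (C2U : Ck 2 U) (C1l : Ck_field 1 l).
Hypothesis grad_l_orth : forall x, \sum_(i < d) grad U x 0 i * l x 0 i = 0.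
Hypothesis crit : critical_point U sigma.
Local Notation H := (hessian U sigma).
Local Notation J := (jacobian_field l sigma).

Lemma cvg_diffq_pderiv i y : diffq (pderiv i U) sigma y @ 0^' --> (y *m H^T) 0 i.
Proof. exact: (@cvg_diffq_mx _ _ (fun i => pderiv i U) sigma y i (C2U.2 i).2). Qed.

Lemma cvg_diffq_field i y : diffq (fun x => l x 0 i) sigma y @ 0^' --> (y *m J^T) 0 i.
Proof. exact: (@cvg_diffq_mx _ _ (fun i x => l x 0 i) sigma y i (C1l i)). Qed.

Lemma field_mul_hessian_eq0 : l sigma *m H = 0.
Proof.
have line_cvg y : (fun t : R => t *: y + sigma) @ 0^' --> sigma.
  by apply: (@cvg_at0_linear_bound _ _ _ _ `|y|) => t; rewrite addrK normrZ.
have first_order (y : 'rV_d) : \sum_i (y *m H^T) 0 i * l sigma 0 i = 0.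
  apply: (lim_sum_mul_eq0 (F := 0^') (f := fun i => diffq (pderiv i U) sigma y)
    (g := fun i t => l (t *: y + sigma) 0 i)) => [i|i|].
  - exact: cvg_diffq_pderiv.
  - exact: cvg_comp _ _ (line_cvg y) ((C1l i).1 sigma).
  apply: nearW => t; rewrite /diffq -[RHS](mulr0 t^-1).
  rewrite -[in RHS](grad_l_orth (t *: y + sigma)) mulr_sumr.
  by apply: eq_bigr => i _; rewrite (critical_point_pderiv i crit) subr0 mxE mulrA.
set u := l sigma *m H.
have u_sq0 : qform 1%:M u = 0.
  have : (u *m H^T *m (l sigma)^T) 0 0 = 0.
    by rewrite -[RHS](first_order u) [LHS]mxE; apply: eq_bigr => i _; rewrite [_^T _ _]mxE.
  by rewrite /qform mulmx1 -mulmxA -trmx_mul.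
have [//|u0] := eqVneq u 0.
by have := qform1_gt0 u0; rewrite u_sq0 ltxx.
Qed.

Lemma hessian_jacobian_qform0 y : l sigma = 0 -> qform (H *m J) y = 0.
Proof.
move=> l0.
have second_order : \sum_i (y *m H^T) 0 i * (y *m J^T) 0 i = 0.
  apply: (lim_sum_mul_eq0 (F := 0^') (f := fun i => diffq (pderiv i U) sigma y)
    (g := fun i => diffq (fun x => l x 0 i) sigma y)) => [i|i|].
  - exact: cvg_diffq_pderiv.
  - exact: cvg_diffq_field.
  apply: nearW => t; rewrite /diffq -[RHS](mulr0 (t^-1 * t^-1)).
  rewrite -[in RHS](grad_l_orth (t *: y + sigma)) mulr_sumr.
  apply: eq_bigr => i _; rewrite (critical_point_pderiv i crit) l0 mxE !subr0.
  by rewrite /grad mxE mulrACA.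
rewrite /qform -[in H *m J](hessian_tr sigma C2U) -[RHS]second_order.
have -> : y *m (H^T *m J) *m y^T = y *m H^T *m (y *m J^T)^T.
  by rewrite trmx_mul trmxK !mulmxA.
by rewrite [LHS]mxE; apply: eq_bigr => i _; rewrite [_^T _ _]mxE.
Qed.

End GradientOrthogonalField.

Theorem lemma3p4 (R : realType) (d : nat)
  (U : 'rV[R]_d -> R) (l : 'rV[R]_d -> 'rV[R]_d) (sigma : 'rV[R]_d)
  (lam mu : R) :
  Ck 3 U -> morse U ->
  Ck_field 1 l ->
  (forall x, \sum_(i < d) grad U x 0 i * l x 0 i = 0) ->
  critical_point U sigma ->
  (* H^sigma has exactly one negative eigenvalue -lam (multiplicity one) *)
  0 < lam ->
  eigenvalue (hessian U sigma) (- lam) ->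
  \rank (eigenspace (hessian U sigma) (- lam)) = 1%N ->
  (forall a : R, a < 0 -> eigenvalue (hessian U sigma) a -> a = - lam) ->
  (* -mu is the unique negative eigenvalue of H^sigma + L^sigma *)
  0 < mu ->
  eigenvalue (hessian U sigma + jacobian_field l sigma) (- mu) ->
  (forall a : R, a < 0 ->
     eigenvalue (hessian U sigma + jacobian_field l sigma) a -> a = - mu) ->
  lam <= mu /\
  lam / (2 * pi * Num.sqrt (- \det (hessian U sigma)))
    <= mu / (2 * pi * Num.sqrt (- \det (hessian U sigma))).
Proof.
move=> C3U morseU C1l grad_l_orth crit lam_gt0 _ _ neg_eigH mu_gt0 eigHJ _.
have C2U := CkS C3U.
have Hsym := hessian_tr sigma C2U.
have Hu : hessian U sigma \in unitmx by rewrite unitmxE unitfE morseU.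
have l0 : l sigma = 0.
  by rewrite -(mulmxK Hu (l sigma)) (field_mul_hessian_eq0 C2U C1l grad_l_orth crit) mul0mx.
have eigH_shift r : eigenvalue (hessian U sigma) r -> 0 <= r * (r + lam).
  move=> eigr; have [r_lt0|r_ge0] := ltrP r 0.
    by rewrite (neg_eigH r r_lt0 eigr) addNr mulr0.
  by rewrite mulr_ge0 // addr_ge0 // ltW.
have lam_le_mu : lam <= mu.
  apply: (neg_eigenvalue_skew_perturbation_ge Hsym Hu _ _ mu_gt0 eigHJ) => y.
    exact: hessian_jacobian_qform0 C2U C1l grad_l_orth crit y l0.
  exact: symmx_qform_shift_ge0.
split=> //; rewrite ler_wpM2r // invr_ge0 mulr_ge0 ?sqrtr_ge0 // mulr_ge0 ?pi_ge0 //.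
Qed.
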